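(* Let $(X,x)$ be a pointed diffeological space and let $A$ be a $D$-open subset of $X$ containing $x$, equipped with the sub-diffeology of $X$. Then the inclusion $A\hookrightarrow X$ induces an isomorphism $\hat{T}_x(A)\cong\hat{T}_x(X)$.
   Context: A diffeological space is a set $X$ together with, for every open subset $U$ of every $\mathbb{R}^n$, a set of functions $U\to X$ called plots, such that constant maps are plots, the composite of a plot with a smooth map between open subsets of Euclidean spaces is a plot, and a function which is locally a plot is a plot; smooth maps send plots to plots. A subset of $X$ is $D$-open if its preimage under every plot is open; the sub-diffeology on a subset consists of maps whose composite with the inclusion is a plot. For a diffeological space $B$, $C^\infty(B,\mathbb{R})$ carries the functional diffeology (a map $U\to C^\infty(B,\mathbb{R})$ is a plot iff its adjoint $U\times B\to\mathbb{R}$ is smooth). $G_x(X)=\operatorname{colim}_B C^\infty(B,\mathbb{R})$ (colimit in diffeological spaces over $D$-open $B\ni x$ with sub-diffeology, along restrictions) is the diffeological algebra of germs at $x$. The external tangent space $\hat{T}_x(X)$ is the vector space of smooth linear maps $F:G_x(X)\to\mathbb{R}$ with $F([f][g])=F([f])g(x)+f(x)F([g])$. A smooth pointed map $h:(X,x)\to(Y,y)$ induces $h_*:\hat T_x(X)\to\hat T_y(Y)$, $h_*(F)([g])=F([g\circ h])$. *)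

From HB Require Import structures.
From mathcomp Require Import all_boot all_order all_algebra.
From mathcomp Require Import all_classical all_reals all_analysis.
From mathcomp Require Import Rstruct Rstruct_topology.

Unset Printing Implicit Defensive.
Import Order.TTheory GRing.Theory Num.Theory.
Import numFieldNormedType.Exports.
Local Open Scope classical_set_scope.
Local Open Scope ring_scope.

Section Diffeology.
Context {R : realType}.
Local Notation E n := 'rV[R]_n.

Fixpoint iderive {V W : normedModType R} (f : V -> W) (vs : seq V) : V -> W :=
  if vs is v :: vs' then (fun y => derive (iderive f vs') y v) else f.

Definition smooth_on {V W : normedModType R} (U : set V) (f : V -> W) : Prop :=
  forall (vs : seq V) (y : V), U y ->
    {for y, continuous (iderive f vs)} /\ (forall v, derivable (iderive f vs) y v).

(* A family of candidate plots: for each n, open U in R^n, maps U -> X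
   (represented by total functions; only the values on U matter). *)
Definition plots (X : Type) := forall n : nat, set (E n) -> (E n -> X) -> Prop.

Record is_diffeology {X : Type} (P : plots X) : Prop := {
  plot_open : forall n U p, P n U p -> open U;
  plot_ext : forall n U p q, P n U p -> (forall u, U u -> p u = q u) -> P n U q;
  plot_const : forall n (U : set (E n)) (c : X), open U -> P n U (fun _ => c);
  plot_comp : forall n m (U : set (E n)) (V : set (E m)) p (F : E m -> E n),
      P n U p -> open V -> smooth_on V F -> (forall v, V v -> U (F v)) ->
      P m V (p \o F);
  plot_local : forall n (U : set (E n)) p, open U ->
      (forall u, U u -> exists W : set (E n), [/\ open W, W u, W `<=` U & P n W p]) ->
      P n U p }.

Definition dsmooth {X Y : Type} (P : plots X) (Q : plots Y) (h : X -> Y) :=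
  forall n U p, P n U p -> Q n U (h \o p).

Definition Dopen {X : Type} (P : plots X) (A : set X) :=
  forall n U p, P n U p -> open (U `&` p @^-1` A).

Definition subplots {X : Type} (P : plots X) (A : set X) : plots {y : X | A y} :=
  fun n U p => P n U (fun u => proj1_sig (p u)).

Lemma incl_smooth {X : Type} (P : plots X) (A : set X) :
  dsmooth (subplots P A) P (@proj1_sig X A).
Proof. by []. Qed.

(* f restricted to B is smooth for the sub-diffeology of B
   (plots of B are plots of X landing in B) *)
Definition smooth_fun_on {X : Type} (P : plots X) (B : set X) (f : X -> R) :=
  forall n (U : set (E n)) p, P n U p -> (forall u, U u -> B (p u)) ->
    smooth_on U (f \o p).

(* plots of C^infty(B, R) with the functional diffeology *)
Definition cinf_plot {X : Type} (P : plots X) (B : set X) {n} (U : set (E n))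
    (Q : E n -> X -> R) :=
  [/\ open U, (forall u, U u -> smooth_fun_on P B (Q u)) &
   forall k (V : set (E k)) (q1 : E k -> E n) (q2 : E k -> X),
     open V -> smooth_on V q1 -> (forall v, V v -> U (q1 v)) ->
     P k V q2 -> (forall v, V v -> B (q2 v)) ->
     smooth_on V (fun v => Q (q1 v) (q2 v))].

(* germs at x: representatives (B, f), B D-open containing x, f smooth on B *)
Definition rep (X : Type) := (set X * (X -> R))%type.

Definition germ_valid {X : Type} (P : plots X) (x : X) (r : rep X) :=
  [/\ Dopen P r.1, r.1 x & smooth_fun_on P r.1 r.2].

Definition germ_eq {X : Type} (P : plots X) (x : X) (r s : rep X) :=
  exists W : set X, [/\ Dopen P W, W x, W `<=` r.1 `&` s.1 &
                      forall y, W y -> r.2 y = s.2 y].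

Definition gcls {X : Type} (P : plots X) (x : X) (r : rep X) : set (rep X) :=
  [set s | germ_valid P x s /\ germ_eq P x r s].

Record germ {X : Type} (P : plots X) (x : X) := Germ {
  gset :> set (rep X);
  gsetP : exists r, germ_valid P x r /\ gset = gcls P x r }.
Arguments gset {X P x}.
Arguments gsetP {X P x}.

Definition germ_of {X : Type} {P : plots X} {x : X} {r : rep X}
  (hr : germ_valid P x r) : germ P x := @Germ X P x (gcls P x r) (ex_intro _ r (conj hr erefl)).

Definition grepr {X : Type} {P : plots X} {x : X} (c : germ P x) : rep X :=
  proj1_sig (cid (gsetP c)).

Lemma grepr_valid {X : Type} {P : plots X} {x : X} (c : germ P x) :
  germ_valid P x (grepr c).
Proof. by rewrite /grepr; case: (cid (gsetP c)) => r [] /=. Qed.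

(* diffeology of G_x(X): the colimit (final) diffeology: locally, a plot
   factors as [_] o Q with Q a plot of some C^infty(B, R) *)
Definition germ_plots {X : Type} (P : plots X) (x : X) : plots (germ P x) :=
  fun n U G => open U /\ forall u, U u ->
    exists (W : set (E n)) (B : set X) (Q : E n -> X -> R),
      [/\ open W /\ W u, W `<=` U, Dopen P B /\ B x, cinf_plot P B W Q &
          forall w, W w -> gset (G w) (B, Q w)].

Definition rep_add {X : Type} (r s : rep X) : rep X :=
  (r.1 `&` s.1, fun y => r.2 y + s.2 y).
Definition rep_scale {X : Type} (k : R) (r : rep X) : rep X :=
  (r.1, fun y => k * r.2 y).
Definition rep_mul {X : Type} (r s : rep X) : rep X :=
  (r.1 `&` s.1, fun y => r.2 y * s.2 y).

(* external tangent vectors: smooth linear derivations G_x(X) -> R.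
   "c contains rep_add r s" with r in a, s in b expresses c = a + b, etc. *)
Definition ext_tangent {X : Type} (P : plots X) (x : X) (F : germ P x -> R) : Prop :=
  [/\ (forall n U G, germ_plots P x n U G -> smooth_on U (F \o G)),
      (forall (a b c : germ P x) r s, gset a r -> gset b s -> gset c (rep_add r s) ->
          F c = F a + F b),
      (forall k (a c : germ P x) r, gset a r -> gset c (rep_scale k r) -> F c = k * F a) &
      (forall (a b c : germ P x) r s, gset a r -> gset b s -> gset c (rep_mul r s) ->
          F c = F a * s.2 x + r.2 x * F b)].

Definition rep_pull {X Y : Type} (h : X -> Y) (r : rep Y) : rep X :=
  (h @^-1` r.1, r.2 \o h).

Lemma pull_valid {X Y : Type} {P : plots X} {Q : plots Y} {h : X -> Y}
  {x : X} {y : Y} (hh : dsmooth P Q h) (hx : h x = y) {r : rep Y} :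
  germ_valid Q y r -> germ_valid P x (rep_pull h r).
Proof.
case=> hO hy hs; split => /=.
- by move=> n U p Pp; exact: (hO n U (h \o p) (hh _ _ _ Pp)).
- by rewrite /preimage /= hx.
- by move=> n U p Pp hU; exact: (hs n U (h \o p) (hh _ _ _ Pp) hU).
Qed.

Definition germ_pull {X Y : Type} {P : plots X} {Q : plots Y} {h : X -> Y}
  {x : X} {y : Y} (hh : dsmooth P Q h) (hx : h x = y) (c : germ Q y) : germ P x :=
  germ_of (pull_valid hh hx (grepr_valid c)).

Definition tpush {X Y : Type} {P : plots X} {Q : plots Y} {h : X -> Y}
  {x : X} {y : Y} (hh : dsmooth P Q h) (hx : h x = y) (F : germ P x -> R) :
  germ Q y -> R := fun c => F (germ_pull hh hx c).

End Diffeology.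

From HB Require Import structures.
From mathcomp Require Import all_boot all_order all_algebra.
From mathcomp Require Import all_classical all_reals all_analysis.
From mathcomp Require Import Rstruct Rstruct_topology.
Import numFieldNormedType.Exports.
Local Open Scope classical_set_scope.
Local Open Scope ring_scope.

(* Since A is D-open, every germ at x of a smooth function on X is the germ
   of its restriction to A, and conversely every germ on A extends (by an
   arbitrary value off A) to a germ on X.  Restriction and extension are
   mutually inverse, respect the algebra operations and values at x, and map
   plots of germs to plots of germs; so precomposition with them identifies
   smooth derivations on both sides. *)

Arguments gset {R X P x}.
Arguments gsetP {R X P x}.

Section PlotRestriction.
Context {R : realType}.

Lemma iderive_id {V : normedModType R} (vs : seq V) :
  iderive (@id V) vs = id \/ exists c : V, iderive (@id V) vs = fun=> c.
Proof.
elim: vs => [|v vs [IH|[c IH]]] /=; first by left.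
- by right; exists v; apply/funext => y; rewrite IH derive_id.
- by right; exists 0; apply/funext => y; rewrite IH derive_cst.
Qed.

Lemma smooth_on_id {V : normedModType R} (U : set V) : smooth_on U (@id V).
Proof.
move=> vs y _; case: (iderive_id vs) => [->|[c ->]]; split.
- exact: cvg_id.
- by move=> v; exact: derivable_id.
- exact: cvg_cst.
- by move=> v; exact: derivable_cst.
Qed.

Lemma plot_restrict {X : Type} {P : @plots R X} (HP : is_diffeology P)
  {n} {U V : set 'rV[R]_n} {p} : P n U p -> open V -> V `<=` U -> P n V p.
Proof.
move=> Pp oV VU.
by have := plot_comp _ HP _ _ _ _ _ _ Pp oV (smooth_on_id V) VU.
Qed.

End PlotRestriction.

Section Germs.
Context {R : realType} {X : Type} {P : @plots R X} {x : X}.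

Lemma DopenI (A B : set X) : Dopen P A -> Dopen P B -> Dopen P (A `&` B).
Proof.
move=> hA hB n U p Pp.
have -> : U `&` p @^-1` (A `&` B) = (U `&` p @^-1` A) `&` (U `&` p @^-1` B).
  by apply/seteqP; split => u /=; tauto.
exact: openI (hA _ _ _ Pp) (hB _ _ _ Pp).
Qed.

Lemma germ_eq_refl r : germ_valid P x r -> germ_eq P x r r.
Proof. by case=> Br rx _; exists r.1. Qed.

Lemma germ_eq_sym {r s} : germ_eq P x r s -> germ_eq P x s r.
Proof.
case=> W [oW Wx Wrs rsW]; exists W; split => //.
- by move=> y /Wrs [].
- by move=> y /rsW ->.
Qed.

Lemma germ_eq_trans {r s t} :
  germ_eq P x r s -> germ_eq P x s t -> germ_eq P x r t.
Proof.
case=> W [oW Wx Wrs rsW] [W' [oW' W'x W'st stW']].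
exists (W `&` W'); split.
- exact: DopenI.
- by [].
- by move=> y [/Wrs [? _] /W'st [_ ?]].
- by move=> y [Wy W'y]; rewrite rsW // stW'.
Qed.

Lemma gcls_eq r s : germ_eq P x r s -> gcls P x r = gcls P x s.
Proof.
move=> rs; apply/seteqP; split => t [t_valid eq_t]; split => //.
- exact: germ_eq_trans (germ_eq_sym rs) eq_t.
- exact: germ_eq_trans rs eq_t.
Qed.

Lemma gsetE (c : germ P x) : gset c = gcls P x (grepr c).
Proof. by rewrite /grepr; case: (cid (gsetP c)) => r []. Qed.

Lemma gset_grepr (c : germ P x) : gset c (grepr c).
Proof. by rewrite gsetE; split; [exact: grepr_valid | exact/germ_eq_refl/grepr_valid]. Qed.

Lemma gset_inj (c d : germ P x) : gset c = gset d -> c = d.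
Proof.
case: c d => c hc [d hd] /= cd; subst d.
by congr Germ; exact: Prop_irrelevance.
Qed.

Lemma germ_ext {c d : germ P x} {r} : gset c r -> gset d r -> c = d.
Proof.
rewrite [gset c]gsetE [gset d]gsetE => -[_ cr] [_ dr].
apply: gset_inj; rewrite !gsetE; apply: gcls_eq.
exact: germ_eq_trans cr (germ_eq_sym dr).
Qed.

End Germs.

Section Pullback.
Context {R : realType} {X Y : Type} {P : @plots R X} {Q : @plots R Y}.
Context {h : X -> Y} {x : X} {y : Y} (hh : dsmooth P Q h) (hxy : h x = y).

Lemma Dopen_preimage W : Dopen Q W -> Dopen P (h @^-1` W).
Proof. by move=> oW n U p Pp; exact: (oW n U (h \o p) (hh _ _ _ Pp)). Qed.

Lemma germ_eq_pull r s :
  germ_eq Q y r s -> germ_eq P x (rep_pull h r) (rep_pull h s).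
Proof.
case=> W [oW Wy Wrs rsW]; exists (h @^-1` W); split.
- exact: Dopen_preimage.
- by rewrite /preimage /= hxy.
- by move=> z /Wrs.
- by move=> z /rsW /= ->.
Qed.

Lemma gset_pull {c : germ Q y} {r} :
  gset c r -> gset (germ_pull hh hxy c) (rep_pull h r).
Proof.
rewrite gsetE => -[r_valid cr]; split.
- exact (pull_valid hh hxy r_valid).
- exact: germ_eq_pull.
Qed.

Lemma germ_plots_pull n U G :
  germ_plots Q y n U G -> germ_plots P x n U (germ_pull hh hxy \o G).
Proof.
case=> oU hG; split => // u /hG [W [B [F [[oW Wu] WU [oB By] [_ sF cF] GF]]]].
exists W, (h @^-1` B), (fun w z => F w (h z)); split => //.
- by split; [exact: Dopen_preimage | rewrite /preimage /= hxy].
- split => // [w Ww m V p Pp pB|k V q1 q2 oV sq1 q1W Pq2 q2B].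
  + exact: (sF w Ww m V (h \o p) (hh _ _ _ Pp) pB).
  + exact: (cF k V q1 (h \o q2) oV sq1 q1W (hh _ _ _ Pq2) q2B).
- by move=> w Ww; exact: gset_pull (GF w Ww).
Qed.

End Pullback.

Section Transfer.
Context {R : realType} {X Y : Type} {P : @plots R X} {Q : @plots R Y}.
Context {x : X} {y : Y} (e : germ P x -> germ Q y) (E : @rep R X -> @rep R Y).

Hypothesis e_plots :
  forall n U G, germ_plots P x n U G -> germ_plots Q y n U (e \o G).
Hypothesis gset_e : forall a r, gset a r -> gset (e a) (E r).
Hypothesis E_add : forall r s, E (rep_add r s) = rep_add (E r) (E s).
Hypothesis E_scale : forall k r, E (rep_scale k r) = rep_scale k (E r).
Hypothesis E_mul : forall r s, E (rep_mul r s) = rep_mul (E r) (E s).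
Hypothesis E_at : forall r, (E r).2 y = r.2 x.

Lemma ext_tangent_comp F : ext_tangent Q y F -> ext_tangent P x (F \o e).
Proof.
case=> Fs Fadd Fscale Fmul; split.
- by move=> n U G /e_plots /Fs.
- move=> a b c r s ar bs /gset_e /=; rewrite E_add.
  exact: Fadd _ _ _ _ _ (gset_e _ _ ar) (gset_e _ _ bs).
- move=> k a c r ar /gset_e /=; rewrite E_scale.
  exact: Fscale _ _ _ _ (gset_e _ _ ar).
- move=> a b c r s ar bs /gset_e; rewrite E_mul.
  move=> /(Fmul _ _ _ _ _ (gset_e _ _ ar) (gset_e _ _ bs)).
  by rewrite /= !E_at.
Qed.

End Transfer.

Lemma ext_tangent_tpush {R : realType} {X Y : Type} {P : @plots R X} {Q : @plots R Y}
    {h : X -> Y} {x : X} {y : Y} (hh : dsmooth P Q h) (hxy : h x = y) F :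
  ext_tangent P x F -> ext_tangent Q y (tpush hh hxy F).
Proof.
apply: (ext_tangent_comp _ (rep_pull h) (germ_plots_pull hh hxy)
  (fun c r => gset_pull hh hxy)) => // r.
by rewrite /= hxy.
Qed.

Section Inclusion.
Context {R : realType} {X : Type} {P : @plots R X} (HP : is_diffeology P).
Context {A : set X} (HA : Dopen P A) {x : X} (hx : A x).

Local Notation SA := {y : X | A y}.
Local Notation PA := (subplots P A).
Local Notation xA := (exist A x hx).
Local Notation incl := (@proj1_sig X A).

(* A retraction of the inclusion; its value off A is irrelevant. *)
Definition lift (y : X) : SA :=
  if pselect (A y) is left Ay then exist _ y Ay else xA.

Lemma liftE y (Ay : A y) : lift y = exist _ y Ay.
Proof.
by rewrite /lift; case: pselect => [Ay'|//]; congr exist; exact: Prop_irrelevance.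
Qed.

Lemma lift_incl (z : SA) : lift (incl z) = z.
Proof. by case: z => y Ay; rewrite liftE. Qed.

Lemma subplot_lift {n U p} :
  P n U p -> (forall u, U u -> A (p u)) -> PA n U (lift \o p).
Proof. by move=> Pp pA; apply: (plot_ext _ HP _ _ _ _ Pp) => u /pA Apu /=; rewrite liftE. Qed.

Definition ext_set (W : set SA) : set X := [set y | exists Ay : A y, W (exist _ y Ay)].

Definition ext_rep (r : @rep R SA) : @rep R X := (ext_set r.1, r.2 \o lift).

Lemma ext_setI W W' : ext_set (W `&` W') = ext_set W `&` ext_set W'.
Proof.
apply/seteqP; split => y /=; first by case=> Ay [? ?]; split; exists Ay.
case=> -[Ay ?] [Ay' ?]; exists Ay; split => //.
by rewrite (Prop_irrelevance Ay Ay').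
Qed.

(* On the open set where p lands in A, p is a plot of A. *)
Lemma Dopen_ext W : Dopen PA W -> Dopen P (ext_set W).
Proof.
move=> oW n U p Pp.
have oUA : open (U `&` p @^-1` A) := HA _ _ _ Pp.
have PUA : P n (U `&` p @^-1` A) p := plot_restrict HP Pp oUA (fun u => @proj1 _ _).
have := oW _ _ _ (subplot_lift PUA (fun u => @proj2 _ _)).
have -> // : (U `&` p @^-1` A) `&` (lift \o p) @^-1` W = U `&` p @^-1` ext_set W.
apply/seteqP; split => u /=.
- by move=> [[Uu Apu]]; rewrite liftE => Wu; split => //; exists Apu.
- by move=> [Uu [Apu Wu]]; split; [split|rewrite liftE].
Qed.

Lemma smooth_fun_ext W g :
  smooth_fun_on PA W g -> smooth_fun_on P (ext_set W) (g \o lift).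
Proof.
move=> sg n U p Pp pW.
have pA : forall u, U u -> A (p u) by move=> u /pW [].
by apply: (sg _ _ _ (subplot_lift Pp pA)) => u /pW [Apu Wpu] /=; rewrite liftE.
Qed.

Lemma ext_valid {r} : germ_valid PA xA r -> germ_valid P x (ext_rep r).
Proof.
case=> oB Bx sf; split.
- exact: Dopen_ext.
- by exists hx.
- exact: smooth_fun_ext.
Qed.

Lemma germ_eq_ext r s :
  germ_eq PA xA r s -> germ_eq P x (ext_rep r) (ext_rep s).
Proof.
case=> W [oW Wx Wrs rsW]; exists (ext_set W); split.
- exact: Dopen_ext.
- by exists hx.
- by move=> y [Ay /Wrs [? ?]]; split; exists Ay.
- by move=> y [Ay Wy] /=; rewrite liftE; exact: rsW.
Qed.

Lemma pull_ext r : rep_pull incl (ext_rep r) = r.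
Proof.
case: r => B g; rewrite /rep_pull /ext_rep /=; congr pair.
- apply/seteqP; split => -[y Ay] /=; last by exists Ay.
  by case=> Ay'; rewrite (Prop_irrelevance Ay' Ay).
- by apply/funext => z /=; rewrite lift_incl.
Qed.

Lemma germ_eq_ext_pull r :
  germ_valid P x r -> germ_eq P x r (ext_rep (rep_pull incl r)).
Proof.
case=> oB Bx _; exists (r.1 `&` A); split.
- exact: DopenI.
- by [].
- by move=> y [By Ay]; split => //; exists Ay.
- by move=> y [By Ay] /=; rewrite liftE.
Qed.

Definition ext_germ (a : germ PA xA) : germ P x :=
  germ_of (ext_valid (grepr_valid a)).

Lemma gset_ext {a : germ PA xA} {r} : gset a r -> gset (ext_germ a) (ext_rep r).
Proof.
rewrite gsetE => -[r_valid ar]; split.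
- exact: ext_valid.
- exact: germ_eq_ext.
Qed.

Lemma germ_plots_ext n U G :
  germ_plots PA xA n U G -> germ_plots P x n U (ext_germ \o G).
Proof.
case=> oU hG; split => // u /hG [W [B [F [[oW Wu] WU [oB Bx] [_ sF cF] GF]]]].
exists W, (ext_set B), (fun w y => F w (lift y)); split => //.
- by split; [exact: Dopen_ext | exists hx].
- split => // [w Ww|k V q1 q2 oV sq1 q1W Pq2 q2B].
  + exact: smooth_fun_ext (sF w Ww).
  + have q2A : forall v, V v -> A (q2 v) by move=> v /q2B [].
    apply: (cF k V q1 _ oV sq1 q1W (subplot_lift Pq2 q2A)) => v /q2B [Aq2v Bq2v] /=.
    by rewrite liftE.
- by move=> w Ww; exact: gset_ext (GF w Ww).
Qed.

Local Notation hxA := (erefl : incl xA = x).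

Lemma pull_ext_germ (a : germ PA xA) :
  germ_pull (incl_smooth P A) hxA (ext_germ a) = a.
Proof.
apply/esym/(germ_ext (gset_grepr a)).
by rewrite -[grepr a]pull_ext; apply/gset_pull/gset_ext/gset_grepr.
Qed.

Lemma ext_pull_germ (c : germ P x) :
  ext_germ (germ_pull (incl_smooth P A) hxA c) = c.
Proof.
have r_valid := grepr_valid c.
apply: (germ_ext (gset_ext (gset_pull _ _ (gset_grepr c)))).
rewrite gsetE; split; last exact: germ_eq_ext_pull.
exact: ext_valid (pull_valid (incl_smooth P A) hxA r_valid).
Qed.

Lemma ext_tangent_ext_germ F :
  ext_tangent P x F -> ext_tangent PA xA (F \o ext_germ).
Proof.
apply: (ext_tangent_comp ext_germ ext_rep germ_plots_ext (@gset_ext)) => // [r s|r s|r].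
- by rewrite /ext_rep /= ext_setI.
- by rewrite /ext_rep /= ext_setI.
- by rewrite /= liftE.
Qed.

End Inclusion.

Theorem proposition3p12 (X : Type) (P : @plots Rdefinitions.R X) (x : X)
  (A : set X) (HP : is_diffeology P) (HA : Dopen P A) (hx : A x) :
  let PA := subplots P A in
  let xA : {y : X | A y} := exist _ x hx in
  let push := tpush (incl_smooth P A) (erefl : proj1_sig xA = x) in
  [/\ (forall F, ext_tangent PA xA F -> ext_tangent P x (push F)),
      (forall (k1 k2 : Rdefinitions.R) F1 F2,
          push (fun c => k1 * F1 c + k2 * F2 c) =
          (fun c => k1 * push F1 c + k2 * push F2 c)),
      (forall F1 F2, ext_tangent PA xA F1 -> ext_tangent PA xA F2 ->
          push F1 = push F2 -> F1 = F2) &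
      (forall F', ext_tangent P x F' -> exists F, ext_tangent PA xA F /\ push F = F')].
Proof.
move=> PA xA push; split => //.
- exact: ext_tangent_tpush.
- move=> F1 F2 _ _ F12; apply/funext => a.
  rewrite -[a](pull_ext_germ HP HA hx); exact (congr1 (fun F => F (ext_germ HP HA hx a)) F12).
- move=> F' F'_tangent; exists (F' \o ext_germ HP HA hx); split.
  + exact: ext_tangent_ext_germ.
  + by apply/funext => c; rewrite /push /tpush /= (ext_pull_germ HP HA hx).
Qed.
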